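(* Let $G>0$, $T>0$, and let $F\colon\mathbb R\to\mathbb R^2$ be $T$-periodic and of class $C^1$. There exists $a_0\in(0,1)$ such that for every $a$ with $a_0\le a<1$, the function $m_a(t,x,p)=\tfrac12|x|^2-\tfrac12a^2$ is a curvature bound function for $v_\lambda$ for all $\lambda\in[0,1]$.
   Context: Let $\Omega=\{(x,p)\in\mathbb R^2\times\mathbb R^2:|x|<1\}$. For $\lambda\in[0,1]$, $v_\lambda\colon\mathbb R\times\Omega\to\mathbb R\times\mathbb R^2\times\mathbb R^2$ is \[ v_\lambda(t,x,p)=\Big(1,\ p,\ \Big(G\sqrt{1-|x|^2}-\tfrac{(x^Tp)^2}{1-|x|^2}-|p|^2\Big)x+\lambda\big((x^TF(t))x-F(t)\big)\Big), \] the right-hand side of $\dot t=1$, $\dot x=p$, $\dot p=\dots$. A $C^2$ function $e$ on an open subset $W$ of $\mathbb R\times\Omega$ is a curvature bound function for $v$ if for every $z\in W$ with $e(z)=0$: $De(z)v(z)=0$ implies $v(z)^TD^2e(z)v(z)+De(z)Dv(z)v(z)>0$, where $De$ is the derivative (row vector) with respect to all variables $(t,x,p)$, $D^2e$ the Hessian and $Dv$ the Jacobian matrix. Here $m_a$ is considered on all of $\mathbb R\times\Omega$. *)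

From Stdlib Require Import Reals Lra.
From Coquelicot Require Import Coquelicot.
Open Scope R_scope.

(* Points of R x R^2 x R^2, ordered as (t, x1, x2, p1, p2). *)
Definition pt : Type := (R * R * R * R * R)%type.

Definition mkpt (t x1 x2 p1 p2 : R) : pt := (t, x1, x2, p1, p2).

Definition coord (i : nat) (z : pt) : R :=
  match z with (t, x1, x2, p1, p2) =>
    match i with 0 => t | 1 => x1 | 2 => x2 | 3 => p1 | 4 => p2 | _ => 0 end
  end.

Definition shift (i : nat) (s : R) (z : pt) : pt :=
  match z with (t, x1, x2, p1, p2) =>
    match i with
    | 0 => (t + s, x1, x2, p1, p2)
    | 1 => (t, x1 + s, x2, p1, p2)
    | 2 => (t, x1, x2 + s, p1, p2)
    | 3 => (t, x1, x2, p1 + s, p2)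
    | 4 => (t, x1, x2, p1, p2 + s)
    | _ => (t, x1, x2, p1, p2)
    end
  end.

Definition partial (f : pt -> R) (i : nat) (z : pt) : R :=
  Derive (fun s => f (shift i s z)) 0.

Definition sum5 (g : nat -> R) : R := sum_f_R0 g 4.

Definition C2_on (W : pt -> Prop) (e : pt -> R) : Prop :=
  forall z, W z ->
    (forall i, (i <= 4)%nat ->
       ex_derive (fun s => e (shift i s z)) 0 /\ continuous (partial e i) z) /\
    (forall i j, (i <= 4)%nat -> (j <= 4)%nat ->
       ex_derive (fun s => partial e j (shift i s z)) 0 /\
       continuous (partial (partial e j) i) z).

Definition De (e : pt -> R) (z w : pt) : R :=
  sum5 (fun i => partial e i z * coord i w).

Definition D2e_quad (e : pt -> R) (z w : pt) : R :=
  sum5 (fun i => sum5 (fun j => coord i w * partial (partial e j) i z * coord j w)).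

Definition De_Dv (e : pt -> R) (v : pt -> pt) (z w : pt) : R :=
  sum5 (fun k => partial e k z *
          sum5 (fun j => partial (fun y => coord k (v y)) j z * coord j w)).

Definition curvature_bound_function (W : pt -> Prop) (v : pt -> pt)
    (e : pt -> R) : Prop :=
  C2_on W e /\
  forall z, W z -> e z = 0 -> De e z (v z) = 0 ->
    D2e_quad e z (v z) + De_Dv e v z (v z) > 0.

Definition RxOmega (z : pt) : Prop := coord 1 z ^ 2 + coord 2 z ^ 2 < 1.

Definition v_lam (G : R) (F1 F2 : R -> R) (lam : R) (z : pt) : pt :=
  match z with (t, x1, x2, p1, p2) =>
    let nx2 := x1 ^ 2 + x2 ^ 2 in
    let xp := x1 * p1 + x2 * p2 in
    let np2 := p1 ^ 2 + p2 ^ 2 in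
    let c := G * sqrt (1 - nx2) - xp ^ 2 / (1 - nx2) - np2 in
    let xF := x1 * F1 t + x2 * F2 t in
    (1, p1, p2, c * x1 + lam * (xF * x1 - F1 t), c * x2 + lam * (xF * x2 - F2 t))
  end.

Definition m_a (a : R) (z : pt) : R :=
  / 2 * (coord 1 z ^ 2 + coord 2 z ^ 2) - / 2 * a ^ 2.

Definition is_C1 (f : R -> R) : Prop :=
  forall t, ex_derive f t /\ continuous (Derive f) t.

(** On the level set [|x| = a] the condition [De v = 0] says [x.p = 0], and the
    curvature expression reduces to
    [s^2 |p|^2 + s (G a^2 - lam (x.F) s)] with [s = sqrt (1 - a^2)].
    The forcing [F] is continuous and periodic, hence bounded, say [|x.F| <= M].
    Taking [a0 = 1 - d^2/2] forces [s <= d] for [a0 <= a < 1], and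
    [d = G / (G + 4 M + 4)] gives [M d < G/4 <= G a^2], so the bracket is positive. *)
From Stdlib Require Import Reals Lra Psatz FunctionalExtensionality.
From Coquelicot Require Import Coquelicot.
Open Scope R_scope.

Lemma periodic_shift_Z (f : R -> R) (T : R) :
  (forall t, f (t + T) = f t) -> forall (k : Z) (u : R), f (u + IZR k * T) = f u.
Proof.
  intros Hper k; induction k as [|k IH|k IH] using Z.peano_ind; intro u.
  - now rewrite Rmult_0_l, Rplus_0_r.
  - replace (u + IZR (Z.succ k) * T) with (u + IZR k * T + T)
      by (rewrite succ_IZR; ring).
    now rewrite Hper.
  - rewrite <- (IH u), <- (Hper (u + IZR (Z.pred k) * T)).
    f_equal; rewrite <- Z.sub_1_r, minus_IZR; ring.
Qed.

Lemma shift_into_period (T t : R) : 0 < T -> exists k : Z, 0 <= t - IZR k * T <= T.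
Proof.
  intro HT; exists (Int_part (t / T)).
  destruct (base_Int_part (t / T)) as [Hle Hgt].
  assert (Ht : t = t / T * T) by (field; lra).
  split; rewrite Ht at 1; nra.
Qed.

Lemma periodic_continuous_bounded (f : R -> R) (T : R) :
  0 < T -> (forall t, f (t + T) = f t) -> (forall t, continuous f t) ->
  exists M, forall t, Rabs (f t) <= M.
Proof.
  intros HT Hper Hcont.
  destruct (continuity_ab_maj (comp Rabs f) 0 T) as [tmax [Hmax _]].
  { lra. }
  { intros c _; apply continuity_pt_comp.
    - apply continuity_pt_filterlim, Hcont.
    - apply Rcontinuity_abs. }
  exists (Rabs (f tmax)); intro t.
  destruct (shift_into_period T t HT) as [k Hk].
  replace t with (t - IZR k * T + IZR k * T) by ring.
  rewrite (periodic_shift_Z f T Hper); exact (Hmax _ Hk).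
Qed.

Lemma is_C1_continuous (f : R -> R) : is_C1 f -> forall t, continuous f t.
Proof.
  intros Hf t; apply (ex_derive_continuous (K := R_AbsRing) (V := R_NormedModule)), Hf.
Qed.

Lemma Rabs_dot_le (x1 x2 y1 y2 M1 M2 : R) :
  x1 ^ 2 + x2 ^ 2 <= 1 -> Rabs y1 <= M1 -> Rabs y2 <= M2 ->
  Rabs (x1 * y1 + x2 * y2) <= M1 + M2.
Proof.
  intros Hx Hy1 Hy2.
  assert (Hx1 : Rabs x1 <= 1) by (apply Rabs_le; split; nra).
  assert (Hx2 : Rabs x2 <= 1) by (apply Rabs_le; split; nra).
  eapply Rle_trans; [apply Rabs_triang|]; rewrite !Rabs_mult.
  pose proof (Rabs_pos x1); pose proof (Rabs_pos x2);
    pose proof (Rabs_pos y1); pose proof (Rabs_pos y2); nra.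
Qed.

Definition grad_m_a (j : nat) (z : pt) : R :=
  match j with 1 | 2 => coord j z | _ => 0 end.

Definition hess_m_a (j i : nat) : R :=
  match j, i with 1, 1 | 2, 2 => 1 | _, _ => 0 end.

Lemma partial_m_a (a : R) (j : nat) : partial (m_a a) j = grad_m_a j.
Proof.
  apply functional_extensionality; intros [[[[t x1] x2] p1] p2]; unfold partial, m_a.
  destruct j as [|[|[|[|[|j]]]]]; simpl; apply is_derive_unique; auto_derive; auto; field.
Qed.

Lemma partial_grad_m_a (j i : nat) : partial (grad_m_a j) i = fun _ => hess_m_a j i.
Proof.
  apply functional_extensionality; intros [[[[t x1] x2] p1] p2]; unfold partial.
  destruct j as [|[|[|j]]]; destruct i as [|[|[|[|[|i]]]]]; simpl;
    apply is_derive_unique; auto_derive; auto; ring.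
Qed.

Lemma continuous_grad_m_a (j : nat) (z : pt) : continuous (grad_m_a j) z.
Proof.
  destruct j as [|[|[|j]]]; try apply continuous_const.
  - apply continuous_ext with (f := fun z : pt => snd (fst (fst (fst z)))).
    { intros [[[[? ?] ?] ?] ?]; reflexivity. }
    apply continuous_comp; [|apply continuous_snd].
    apply continuous_comp; [|apply continuous_fst].
    apply continuous_comp; apply continuous_fst.
  - apply continuous_ext with (f := fun z : pt => snd (fst (fst z))).
    { intros [[[[? ?] ?] ?] ?]; reflexivity. }
    apply continuous_comp; [|apply continuous_snd].
    apply continuous_comp; apply continuous_fst.
Qed.

Lemma m_a_C2 (a : R) (W : pt -> Prop) : C2_on W (m_a a).
Proof.
  intros [[[[t x1] x2] p1] p2] _; split.
  - intros i _; split; [|rewrite partial_m_a; apply continuous_grad_m_a].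
    unfold m_a; destruct i as [|[|[|[|[|i]]]]]; simpl; auto_derive; auto.
  - intros i j _ _; rewrite partial_m_a, partial_grad_m_a; split; [|apply continuous_const].
    destruct j as [|[|[|j]]]; destruct i as [|[|[|[|[|i]]]]]; simpl; auto_derive; auto.
Qed.

Lemma De_m_a (a : R) (z w : pt) :
  De (m_a a) z w = coord 1 z * coord 1 w + coord 2 z * coord 2 w.
Proof. unfold De, sum5; simpl; rewrite !partial_m_a; simpl; ring. Qed.

Lemma D2e_quad_m_a (a : R) (z w : pt) :
  D2e_quad (m_a a) z w = coord 1 w ^ 2 + coord 2 w ^ 2.
Proof. unfold D2e_quad, sum5; simpl; rewrite !partial_m_a, !partial_grad_m_a; simpl; ring. Qed.

Lemma partial_v_lam_x (G : R) (F1 F2 : R -> R) (lam : R) (k j : nat) (z : pt) :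
  (k = 1 \/ k = 2)%nat ->
  partial (fun y => coord k (v_lam G F1 F2 lam y)) j z = if Nat.eqb j (k + 2) then 1 else 0.
Proof.
  intros Hk; destruct z as [[[[t x1] x2] p1] p2]; unfold partial.
  destruct Hk as [->| ->]; destruct j as [|[|[|[|[|j]]]]]; simpl;
    apply is_derive_unique; auto_derive; auto; ring.
Qed.

Lemma De_Dv_m_a_v_lam (a G : R) (F1 F2 : R -> R) (lam : R) (z w : pt) :
  De_Dv (m_a a) (v_lam G F1 F2 lam) z w = coord 1 z * coord 3 w + coord 2 z * coord 4 w.
Proof.
  unfold De_Dv, sum5; simpl; rewrite !partial_m_a.
  rewrite !(partial_v_lam_x G F1 F2 lam 1), !(partial_v_lam_x G F1 F2 lam 2) by auto.
  simpl; ring.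
Qed.

Lemma curvature_m_a_v_lam (a G : R) (F1 F2 : R -> R) (lam t x1 x2 p1 p2 : R) :
  x1 * p1 + x2 * p2 = 0 ->
  D2e_quad (m_a a) (t, x1, x2, p1, p2) (v_lam G F1 F2 lam (t, x1, x2, p1, p2))
  + De_Dv (m_a a) (v_lam G F1 F2 lam) (t, x1, x2, p1, p2)
      (v_lam G F1 F2 lam (t, x1, x2, p1, p2))
  = (p1 ^ 2 + p2 ^ 2) * (1 - (x1 ^ 2 + x2 ^ 2))
    + G * sqrt (1 - (x1 ^ 2 + x2 ^ 2)) * (x1 ^ 2 + x2 ^ 2)
    - lam * (x1 * F1 t + x2 * F2 t) * (1 - (x1 ^ 2 + x2 ^ 2)).
Proof.
  intros Hxp; rewrite D2e_quad_m_a, De_Dv_m_a_v_lam.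
  cbv beta iota zeta delta [v_lam coord]; rewrite Hxp; unfold Rdiv; ring.
Qed.

Lemma forcing_scale_bounds (G M : R) :
  0 < G -> 0 <= M -> 0 < G / (G + 4 * M + 4) < 1 /\ 4 * M * (G / (G + 4 * M + 4)) < G.
Proof.
  intros HG HM; set (d := G / (G + 4 * M + 4)).
  assert (Hd : d * (G + 4 * M + 4) = G) by (unfold d; field; lra).
  assert (Hd0 : 0 < d) by (apply Rdiv_lt_0_compat; lra).
  split; [split|]; nra.
Qed.

Lemma sqrt_one_minus_sq_le (a d : R) :
  0 <= d -> 1 - d ^ 2 / 2 <= a <= 1 -> sqrt (1 - a ^ 2) <= d.
Proof.
  intros Hd Ha; rewrite <- (sqrt_pow2 d Hd); apply sqrt_le_1_alt; nra.
Qed.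

Lemma curvature_margin_pos (G M P Y d a : R) :
  0 < G -> 0 <= P -> Y <= M -> 0 < d < 1 -> 4 * M * d < G -> 1 - d ^ 2 / 2 <= a < 1 ->
  P * (1 - a ^ 2) + G * sqrt (1 - a ^ 2) * a ^ 2 - Y * (1 - a ^ 2) > 0.
Proof.
  intros HG HP HY Hd HMd Ha.
  assert (Ha2 : 1 / 2 < a) by nra.
  set (s := sqrt (1 - a ^ 2)).
  assert (Hsd : s <= d) by (apply sqrt_one_minus_sq_le; lra).
  assert (Hs2 : 1 - a ^ 2 = s * s) by (unfold s; rewrite sqrt_sqrt; nra).
  assert (Hs : 0 < s) by (apply sqrt_lt_R0; nra).
  assert (HYs : Y * s < G / 4).
  { destruct (Rle_lt_dec 0 M); nra. }
  assert (Hgap : 0 < G * a ^ 2 - Y * s).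
  { assert (Hsq : 1 / 4 < a ^ 2) by nra; nra. }
  rewrite Hs2; nra.
Qed.

Theorem lemma4p1 (G T : R) (F1 F2 : R -> R) :
  0 < G -> 0 < T ->
  (forall t, F1 (t + T) = F1 t /\ F2 (t + T) = F2 t) ->
  is_C1 F1 -> is_C1 F2 ->
  exists a0, 0 < a0 < 1 /\
    forall a, a0 <= a < 1 ->
      forall lam, 0 <= lam <= 1 ->
        curvature_bound_function RxOmega (v_lam G F1 F2 lam) (m_a a).
Proof.
  intros HG HT Hper HF1 HF2.
  destruct (periodic_continuous_bounded F1 T HT (fun t => proj1 (Hper t))
              (is_C1_continuous F1 HF1)) as [M1 HM1].
  destruct (periodic_continuous_bounded F2 T HT (fun t => proj2 (Hper t))
              (is_C1_continuous F2 HF2)) as [M2 HM2].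
  assert (HM : 0 <= M1 + M2)
    by (specialize (HM1 0); specialize (HM2 0);
        pose proof (Rabs_pos (F1 0)); pose proof (Rabs_pos (F2 0)); lra).
  set (d := G / (G + 4 * (M1 + M2) + 4)).
  destruct (forcing_scale_bounds G (M1 + M2) HG HM) as [Hd HMd]; fold d in Hd, HMd.
  exists (1 - d ^ 2 / 2); split; [nra|].
  intros a Ha lam Hlam; split; [apply m_a_C2|].
  intros [[[[t x1] x2] p1] p2] Hz Hm HDe.
  unfold RxOmega, m_a in Hz, Hm; cbn [coord] in Hz, Hm.
  rewrite De_m_a in HDe; cbn [coord v_lam] in HDe.
  assert (Hn : x1 ^ 2 + x2 ^ 2 = a ^ 2) by lra.
  assert (HX : Rabs (x1 * F1 t + x2 * F2 t) <= M1 + M2)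
    by (apply Rabs_dot_le; auto; lra).
  rewrite curvature_m_a_v_lam by exact HDe; rewrite Hn.
  apply curvature_margin_pos with (M := M1 + M2) (d := d); auto; try lra.
  - nra.
  - pose proof (Rle_abs (x1 * F1 t + x2 * F2 t)); nra.
Qed.
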